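(* A geodesic metric space $(X,d)$ is a quasi-tree if and only if there exists $A\geqslant 0$ such that for every $n\geqslant 2$ and all points $x_0,x_1,\ldots,x_n\in X$, \[(x_1,x_n)_{x_0}\geqslant\min_{1\leqslant i\leqslant n-1}(x_i,x_{i+1})_{x_0}-A.\]
   Context: The Gromov product is $(x,y)_{x_0}=\frac12\big(d(x_0,x)+d(x_0,y)-d(x,y)\big)$. A quasi-tree is a geodesic metric space that is quasi-isometric to a simplicial tree (a 1-dimensional simplicial complex which is an $\mathbb{R}$-tree for the path metric with edges of length 1), where a quasi-isometry is a map $f$ with $\frac1L d(x,y)-C\leqslant d(f(x),f(y))\leqslant Ld(x,y)+C$ for some $L\geqslant1,C\geqslant0$ and with image $C$-dense in the target. *)

From Stdlib Require Import Reals Lra List ClassicalEpsilon.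
Import ListNotations.
Open Scope R_scope.

Definition is_metric {X : Type} (d : X -> X -> R) : Prop :=
  (forall x y, d x y = 0 <-> x = y) /\
  (forall x y, d x y = d y x) /\
  (forall x y z, d x z <= d x y + d y z).

Definition geodesic {X : Type} (d : X -> X -> R) : Prop :=
  forall x y : X, exists g : R -> X,
    g 0 = x /\ g (d x y) = y /\
    forall s t, 0 <= s <= d x y -> 0 <= t <= d x y ->
      d (g s) (g t) = Rabs (s - t).

Definition gromov {X : Type} (d : X -> X -> R) (x0 x y : X) : R :=
  (d x0 x + d x0 y - d x y) / 2.

Definition quasi_isometry {X Y : Type} (d : X -> X -> R) (e : Y -> Y -> R)
  (f : X -> Y) (L C : R) : Prop :=
  1 <= L /\ 0 <= C /\
  (forall x y, d x y / L - C <= e (f x) (f y) <= L * d x y + C) /\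
  (forall y : Y, exists x : X, e (f x) y <= C).

Definition quasi_isometric {X Y : Type} (d : X -> X -> R) (e : Y -> Y -> R) : Prop :=
  exists f L C, quasi_isometry d e f L C.

Inductive walk {V : Type} (adj : V -> V -> Prop) : nat -> V -> V -> Prop :=
| walk0 : forall v, walk adj 0 v v
| walkS : forall n u w v, adj u w -> walk adj n w v -> walk adj (S n) u v.

Definition has_cycle {V : Type} (adj : V -> V -> Prop) : Prop :=
  exists (l : list V) (v0 : V), (3 <= length l)%nat /\ NoDup l /\
    (forall i, (S i < length l)%nat -> adj (nth i l v0) (nth (S i) l v0)) /\
    adj (last l v0) (hd v0 l).

Definition is_tree {V : Type} (adj : V -> V -> Prop) : Prop :=
  (forall u v, adj u v -> adj v u) /\
  (forall u, ~ adj u u) /\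
  (forall u v, exists n, walk adj n u v) /\
  ~ has_cycle adj.

Definition gdist {V : Type} (adj : V -> V -> Prop) (u v : V) : nat :=
  epsilon (inhabits 0%nat)
    (fun n => walk adj n u v /\ forall m, walk adj m u v -> (n <= m)%nat).

(* Points of the geometric realization: a vertex, or an interior point of an
   edge u--v at distance t in (0,1) from u (REdge u v t = REdge v u (1-t)
   geometrically). *)
Inductive rpt (V : Type) : Type :=
| RVert : V -> rpt V
| REdge : V -> V -> R -> rpt V.
Arguments RVert {V}.
Arguments REdge {V}.

Definition rvalid {V : Type} (adj : V -> V -> Prop) (p : rpt V) : Prop :=
  match p with
  | RVert _ => True
  | REdge u v t => adj u v /\ 0 < t < 1
  end.

Definition rpoint {V : Type} (adj : V -> V -> Prop) : Type :=
  { p : rpt V | rvalid adj p }.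

Definition rends {V : Type} (p : rpt V) : list (V * R) :=
  match p with
  | RVert v => [(v, 0)]
  | REdge u v t => [(u, t); (v, 1 - t)]
  end.

Definition Rmin_list (l : list R) : R :=
  match l with
  | [] => 0
  | h :: tl => fold_right Rmin h tl
  end.

(* Path metric of the realization with edges of length 1. *)
Definition rdist0 {V : Type} (adj : V -> V -> Prop) (p q : rpt V) : R :=
  let via := Rmin_list
    (flat_map (fun a => map (fun b => snd a + INR (gdist adj (fst a) (fst b)) + snd b)
                            (rends q)) (rends p)) in
  match p, q with
  | REdge u v t, REdge u' v' t' =>
      if excluded_middle_informative (u = u' /\ v = v') then Rmin via (Rabs (t - t'))
      else if excluded_middle_informative (u = v' /\ v = u')
           then Rmin via (Rabs (t - (1 - t')))
      else via
  | _, _ => via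
  end.

Definition rdist {V : Type} (adj : V -> V -> Prop) (p q : rpoint adj) : R :=
  rdist0 adj (proj1_sig p) (proj1_sig q).

Definition quasi_tree {X : Type} (d : X -> X -> R) : Prop :=
  exists (V : Type) (adj : V -> V -> Prop), is_tree adj /\ quasi_isometric d (rdist adj).

(* minfrom1 f k = min_{1 <= i <= k+1} f i *)
Fixpoint minfrom1 (f : nat -> R) (k : nat) : R :=
  match k with
  | O => f 1%nat
  | S k' => Rmin (minfrom1 f k') (f (S (S k')))
  end.

(* Simplicial trees are 0-hyperbolic and have tripods, and nothing else is used of them.
   If X is quasi-isometric to a tree, the image of a geodesic [x_1, x_n] stays uniformly close to
   tripod points of the tree, so for any chain x_1, ..., x_n some geodesic [x_i, x_(i+1)] passes
   uniformly close to the point p of [x_1, x_n] with d(x_0, p) ~ (x_1, x_n)_{x_0}; as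
   (x_i, x_(i+1))_{x_0} <= d(x_0, q) for every q on [x_i, x_(i+1)], the inequality follows.
   Conversely, fix a base point o and cut X into annuli of width 2A + 1 around it. Two points of
   the k-th annulus are identified when some chain joins them whose consecutive Gromov products
   are at least k(2A + 1) - A; the classes are the vertices of a tree in which a class is joined
   to the class of a point one annulus closer to o on a geodesic. The chain condition makes this
   parent unique and the classes uniformly bounded, so x |-> its class is a quasi-isometry. *)

From Stdlib Require Import Reals Lra Lia List ZArith Wf_nat ClassicalEpsilon Classical
  ProofIrrelevance FunctionalExtensionality PropExtensionality.
Import ListNotations.
Open Scope R_scope.

Definition geodesic_path {X : Type} (d : X -> X -> R) (gm : R -> X) (l : R) : Prop :=
  forall s t, 0 <= s <= l -> 0 <= t <= l -> d (gm s) (gm t) = Rabs (s - t).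

Lemma geodesic_path_dist {X : Type} (d : X -> X -> R) gm l t :
  geodesic_path d gm l -> 0 <= t <= l ->
  d (gm 0) (gm t) = t /\ d (gm t) (gm l) = l - t.
Proof.
  intros Hg Ht. rewrite !Hg by lra.
  rewrite Rabs_left1, (Rabs_left1 (t - l)) by lra. split; lra.
Qed.

Section Metric.
Variables (X : Type) (d : X -> X -> R).
Hypothesis hmet : is_metric d.

Lemma metric_refl x : d x x = 0.
Proof. apply (proj1 hmet). reflexivity. Qed.

Lemma metric_sym x y : d x y = d y x.
Proof. apply (proj1 (proj2 hmet)). Qed.

Lemma metric_triangle x y z : d x z <= d x y + d y z.
Proof. apply (proj2 (proj2 hmet)). Qed.

Lemma metric_nonneg x y : 0 <= d x y.
Proof.
  pose proof (metric_triangle x y x). rewrite metric_refl, (metric_sym y x) in H. lra.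
Qed.

Lemma gromov_sym o x y : gromov d o x y = gromov d o y x.
Proof. unfold gromov. rewrite (metric_sym x y). lra. Qed.

Lemma gromov_nonneg o x y : 0 <= gromov d o x y.
Proof.
  unfold gromov. pose proof (metric_triangle x o y). rewrite (metric_sym x o) in H. lra.
Qed.

Lemma gromov_le_dist o x y : gromov d o x y <= d o x.
Proof. unfold gromov. pose proof (metric_triangle o x y). lra. Qed.

Lemma gromov_ge_dist_sub o x y : d o x - d x y <= gromov d o x y.
Proof.
  unfold gromov. pose proof (metric_triangle o y x). rewrite (metric_sym y x) in H. lra.
Qed.

Lemma gromov_diag o x : gromov d o x x = d o x.
Proof. unfold gromov. rewrite metric_refl. lra. Qed.

Lemma gromov_between_base o z x : d o z + d z x = d o x -> gromov d o z x = d o z.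
Proof. unfold gromov. lra. Qed.

Lemma gromov_le_between o x y z : d x z + d z y = d x y -> gromov d o x y <= d o z.
Proof.
  intros. unfold gromov. pose proof (metric_triangle o z x). pose proof (metric_triangle o z y).
  rewrite (metric_sym z x) in H0. lra.
Qed.

Lemma geodesic_point x y t : geodesic d -> 0 <= t <= d x y ->
  exists z, d x z = t /\ d z y = d x y - t.
Proof.
  intros hgeo Ht. destruct (hgeo x y) as [gm [G0 [G1 Hg]]].
  destruct (geodesic_path_dist d gm (d x y) t Hg Ht) as [E1 E2].
  rewrite G0 in E1. rewrite G1 in E2. eauto.
Qed.

End Metric.

Lemma least_witness (P : nat -> Prop) :
  (exists n, P n) -> exists n, P n /\ forall m, P m -> (n <= m)%nat.
Proof.
  intros HP. destruct (dec_inh_nat_subset_has_unique_least_element P (fun n => classic (P n)) HP)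
    as [n [[Hn Hmin] _]].
  eauto.
Qed.

Lemma last_below (P : nat -> Prop) m : P 0%nat ->
  exists j, (j <= m)%nat /\ P j /\ forall i, (j < i <= m)%nat -> ~ P i.
Proof.
  intros H0. induction m as [|m IH].
  - exists 0%nat. repeat split; auto. lia.
  - destruct (classic (P (S m))) as [HS|HS].
    + exists (S m). repeat split; auto. lia.
    + destruct IH as [j [Hj [Pj Hmax]]]. exists j. repeat split; auto.
      intros i Hi. destruct (Nat.eq_dec i (S m)) as [->|]; auto. apply Hmax. lia.
Qed.

Lemma last_as_nth {A : Type} (l : list A) x : l <> [] -> last l x = nth (length l - 1) l x.
Proof.
  induction l as [|a l IH]; intros Hl; [congruence|].
  destruct l as [|b l]; [reflexivity|].
  change (last (a :: b :: l) x) with (last (b :: l) x).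
  rewrite IH by congruence. simpl length. rewrite !Nat.sub_succ, !Nat.sub_0_r. reflexivity.
Qed.

Section Walks.
Variables (V : Type) (adj : V -> V -> Prop).

Lemma walk_app n u v m w : walk adj n u v -> walk adj m v w -> walk adj (n + m) u w.
Proof. induction 1; intros; simpl; auto. econstructor; eauto. Qed.

Lemma walk_snoc n u v w : walk adj n u v -> adj v w -> walk adj (S n) u w.
Proof.
  intros. replace (S n) with (n + 1)%nat by lia.
  eapply walk_app; eauto. econstructor; eauto. constructor.
Qed.

Lemma walk_rev : (forall u v, adj u v -> adj v u) ->
  forall n u v, walk adj n u v -> walk adj n v u.
Proof. intros Hsym. induction 1; [constructor | eapply walk_snoc; eauto]. Qed.

Lemma walk_zero_eq u v : walk adj 0 u v -> u = v.
Proof. now inversion 1. Qed.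

Lemma walk_as_path n u v : walk adj n u v ->
  exists f : nat -> V, f 0%nat = u /\ f n = v /\ forall i, (i < n)%nat -> adj (f i) (f (S i)).
Proof.
  induction 1 as [v|n u w v Huw _ [f [Hf0 [Hfn Hf]]]].
  - exists (fun _ => v). repeat split; auto. lia.
  - exists (fun i => match i with O => u | S j => f j end). repeat split; auto.
    intros [|i] Hi; [subst; auto | apply Hf; lia].
Qed.

Lemma path_walk (f : nat -> V) n : (forall i, (i < n)%nat -> adj (f i) (f (S i))) ->
  forall k, (k <= n)%nat -> walk adj (n - k) (f k) (f n).
Proof.
  intros Hf k Hk. remember (n - k)%nat as j eqn:Hj. revert k Hk Hj.
  induction j as [|j IH]; intros k Hk Hj.
  - replace k with n by lia. constructor.
  - econstructor; [apply Hf; lia | apply IH; lia].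
Qed.

Lemma path_walk0 (f : nat -> V) n : (forall i, (i < n)%nat -> adj (f i) (f (S i))) ->
  walk adj n (f 0%nat) (f n).
Proof. intros Hf. pose proof (path_walk f n Hf 0 (Nat.le_0_l n)). now rewrite Nat.sub_0_r in H. Qed.

Lemma gdist_spec u v : (exists n, walk adj n u v) ->
  walk adj (gdist adj u v) u v /\ forall m, walk adj m u v -> (gdist adj u v <= m)%nat.
Proof.
  intros H. unfold gdist.
  apply (epsilon_spec (inhabits 0%nat) (fun n => walk adj n u v /\ forall m, walk adj m u v -> (n <= m)%nat)).
  now apply least_witness.
Qed.

Lemma has_cycle_of_path (c : nat -> V) N : (3 <= N)%nat ->
  (forall i j, (i < N)%nat -> (j < N)%nat -> c i = c j -> i = j) ->
  (forall i, (S i < N)%nat -> adj (c i) (c (S i))) -> adj (c (N - 1)%nat) (c 0%nat) ->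
  has_cycle adj.
Proof.
  intros HN Hinj Hadj Hlast. exists (map c (seq 0 N)), (c 0%nat).
  assert (Hnth : forall i, (i < N)%nat -> nth i (map c (seq 0 N)) (c 0%nat) = c i).
  { intros. rewrite map_nth, seq_nth; auto. }
  assert (Hne : map c (seq 0 N) <> []) by (destruct N; [lia | discriminate]).
  rewrite length_map, length_seq. repeat split; auto.
  - apply (NoDup_nth _ (c 0%nat)). rewrite length_map, length_seq.
    intros i j Hi Hj. rewrite !Hnth by auto. auto.
  - intros. rewrite !Hnth by lia. auto.
  - rewrite last_as_nth, length_map, length_seq, Hnth by (auto || lia).
    destruct N; [lia | exact Hlast].
Qed.

Lemma argmax_below (f : nat -> nat) N : (1 <= N)%nat ->
  exists i, (i < N)%nat /\ forall j, (j < N)%nat -> (f j <= f i)%nat.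
Proof.
  intros HN. induction N as [|N IH]; [lia|].
  destruct (Nat.eq_dec N 0) as [->|HN0].
  - exists 0%nat. split; [lia|]. intros j Hj. replace j with 0%nat by lia. lia.
  - destruct IH as [i [Hi Hmax]]; [lia|].
    destruct (le_lt_dec (f N) (f i)).
    + exists i. split; [lia|]. intros j Hj.
      destruct (Nat.eq_dec j N) as [->|]; [auto | apply Hmax; lia].
    + exists N. split; [lia|]. intros j Hj.
      destruct (Nat.eq_dec j N) as [->|]; [auto | specialize (Hmax j ltac:(lia)); lia].
Qed.

Lemma no_cycle_of_unique_parent (level : V -> nat) (parent : V -> V -> Prop) :
  (forall u v, adj u v -> parent u v \/ parent v u) ->
  (forall u v, parent u v -> level u = S (level v)) ->
  (forall u v v', parent u v -> parent u v' -> v = v') ->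
  ~ has_cycle adj.
Proof.
  intros Hadj Hlev Huniq [l [v0 [Hl [Hnd [Hpath Hlast]]]]].
  set (N := length l) in *. set (c i := nth i l v0).
  assert (Hclose : adj (c (N - 1)%nat) (c 0%nat)).
  { unfold c, N. rewrite <- last_as_nth.
    - destruct l; exact Hlast.
    - intros E. unfold N in Hl. rewrite E in Hl. simpl in Hl. lia. }
  destruct (argmax_below (fun i => level (c i)) N ltac:(lia)) as [i [Hi Hmax]].
  set (prev := if (i =? 0)%nat then (N - 1)%nat else (i - 1)%nat).
  set (next := if (i =? N - 1)%nat then 0%nat else S i).
  assert (Hprev : (prev < N)%nat) by (unfold prev; destruct (Nat.eqb_spec i 0); lia).
  assert (Hnext : (next < N)%nat) by (unfold next; destruct (Nat.eqb_spec i (N - 1)); lia).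
  assert (Hparent : forall j, (j < N)%nat -> adj (c i) (c j) \/ adj (c j) (c i) ->
            parent (c i) (c j)).
  { intros j Hj [H|H]; destruct (Hadj _ _ H) as [P|P]; auto;
      apply Hlev in P; specialize (Hmax j Hj); cbv beta in Hmax; lia. }
  assert (Pprev : parent (c i) (c prev)).
  { apply Hparent; auto. right. unfold prev. destruct (Nat.eqb_spec i 0) as [->|].
    - exact Hclose.
    - replace i with (S (i - 1)) at 2 by lia. apply Hpath. lia. }
  assert (Pnext : parent (c i) (c next)).
  { apply Hparent; auto. left. unfold next. destruct (Nat.eqb_spec i (N - 1)) as [->|].
    - exact Hclose.
    - apply Hpath. lia. }
  pose proof (proj1 (NoDup_nth l v0) Hnd prev next Hprev Hnext (Huniq _ _ _ Pprev Pnext)).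
  unfold prev, next in *. destruct (Nat.eqb_spec i 0); destruct (Nat.eqb_spec i (N - 1)); lia.
Qed.

End Walks.

Section Tree.
Variables (V : Type) (adj : V -> V -> Prop).
Hypothesis tree : is_tree adj.

Lemma tree_sym u v : adj u v -> adj v u.
Proof. apply (proj1 tree). Qed.

Lemma tree_irrefl u : ~ adj u u.
Proof. apply (proj1 (proj2 tree)). Qed.

Lemma tree_connected u v : exists n, walk adj n u v.
Proof. apply (proj1 (proj2 (proj2 tree))). Qed.

Lemma tree_acyclic : ~ has_cycle adj.
Proof. apply (proj2 (proj2 (proj2 tree))). Qed.

Lemma gdist_walk u v : walk adj (gdist adj u v) u v.
Proof. apply gdist_spec, tree_connected. Qed.

Lemma gdist_le_walk m u v : walk adj m u v -> (gdist adj u v <= m)%nat.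
Proof. apply gdist_spec, tree_connected. Qed.

Lemma gdist_refl u : gdist adj u u = 0%nat.
Proof. pose proof (gdist_le_walk 0 u u (walk0 _ u)). lia. Qed.

Lemma gdist_eq0 u v : gdist adj u v = 0%nat -> u = v.
Proof. intros H. apply walk_zero_eq with adj. rewrite <- H. apply gdist_walk. Qed.

Lemma gdist_sym u v : gdist adj u v = gdist adj v u.
Proof.
  apply Nat.le_antisymm; apply gdist_le_walk, walk_rev, gdist_walk; exact tree_sym.
Qed.

Lemma gdist_triangle u v w : (gdist adj u w <= gdist adj u v + gdist adj v w)%nat.
Proof. apply gdist_le_walk. eapply walk_app; apply gdist_walk. Qed.

Lemma gdist_adj u v : adj u v -> gdist adj u v = 1%nat.
Proof.
  intros H. assert (H1 : walk adj 1 u v) by (econstructor; eauto; constructor).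
  apply gdist_le_walk in H1. destruct (gdist adj u v) eqn:E; [|lia].
  apply gdist_eq0 in E. subst. now destruct (tree_irrefl v).
Qed.

Lemma geodesic_walk w v : exists a : nat -> V,
  a 0%nat = w /\ a (gdist adj w v) = v /\
  (forall i, (i < gdist adj w v)%nat -> adj (a i) (a (S i))) /\
  (forall i, (i <= gdist adj w v)%nat -> gdist adj w (a i) = i).
Proof.
  destruct (walk_as_path V adj _ _ _ (gdist_walk w v)) as [a [H0 [Hn Ha]]].
  exists a. repeat split; auto. intros i Hi.
  assert (Wi : walk adj i w (a i)).
  { rewrite <- H0. apply path_walk0. intros; apply Ha; lia. }
  pose proof (path_walk V adj a _ Ha i Hi) as Wrest. rewrite Hn in Wrest.
  pose proof (gdist_le_walk _ _ _ Wi).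
  pose proof (gdist_le_walk _ _ _ (walk_app V adj _ _ _ _ _ (gdist_walk w (a i)) Wrest)).
  lia.
Qed.

Section TwoGeodesics.
Variable w : V.
Variables (a b : nat -> V) (k : nat).
Hypotheses (Ha0 : a 0%nat = w) (Hb0 : b 0%nat = w)
  (Ha : forall i, (i < k)%nat -> adj (a i) (a (S i)))
  (Hb : forall i, (i < k)%nat -> adj (b i) (b (S i)))
  (Ha_depth : forall i, (i <= k)%nat -> gdist adj w (a i) = i)
  (Hb_depth : forall i, (i <= k)%nat -> gdist adj w (b i) = i)
  (Hk : a k <> b k).

Lemma last_agreement : exists i0, (i0 < k)%nat /\ a i0 = b i0 /\
  forall i, (i0 < i <= k)%nat -> a i <> b i.
Proof.
  destruct (last_below (fun i => a i = b i) k) as [i0 [Hi0 [Heq Hne]]]; [congruence|].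
  exists i0. repeat split; auto.
  destruct (Nat.eq_dec i0 k) as [->|]; [contradiction | lia].
Qed.

(* The cycle runs up [a] from the last agreement [i0] to [a k] and back down [b]; its vertices
   are distinct because those at the same depth lie on different geodesics. *)
Lemma geodesic_ends_not_adjacent : ~ adj (a k) (b k).
Proof.
  intros Hab. destruct last_agreement as [i0 [Hi0 [Heq Hne]]].
  set (m := (k - i0)%nat).
  set (c j := if (j <=? m)%nat then a (i0 + j)%nat else b (i0 + (2 * m + 1) - j)%nat).
  apply tree_acyclic, (has_cycle_of_path V adj c (2 * m + 1)); [lia | | |].
  - intros i j Hi Hj Hc. unfold c in Hc.
    destruct (Nat.leb_spec i m); destruct (Nat.leb_spec j m); try lia;
    match type of Hc with ?x = ?y => assert (Hd : gdist adj w x = gdist adj w y) by congruence end;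
    repeat first [rewrite Ha_depth in Hd by lia | rewrite Hb_depth in Hd by lia]; try lia.
    + exfalso. apply (Hne (i0 + i)%nat); [lia|]. rewrite Hc. f_equal. lia.
    + exfalso. apply (Hne (i0 + j)%nat); [lia|]. rewrite <- Hc. f_equal. lia.
  - intros i Hi. unfold c. destruct (Nat.leb_spec i m); destruct (Nat.leb_spec (S i) m); try lia.
    + replace (i0 + S i)%nat with (S (i0 + i)) by lia. apply Ha; lia.
    + replace i with m by lia. replace (i0 + m)%nat with k by lia.
      replace (i0 + (2 * m + 1) - S m)%nat with k by lia. auto.
    + replace (i0 + (2 * m + 1) - i)%nat with (S (i0 + (2 * m + 1) - S i)) by lia.
      apply tree_sym, Hb. lia.
  - unfold c. destruct (Nat.leb_spec (2 * m + 1 - 1) m); [lia|].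
    destruct (Nat.leb_spec 0 m); [|lia].
    replace (i0 + (2 * m + 1) - (2 * m + 1 - 1))%nat with (S i0) by lia.
    rewrite Nat.add_0_r, Heq. apply tree_sym, Hb. lia.
Qed.

Lemma geodesic_ends_no_common_child v :
  gdist adj w v = S k -> adj (a k) v -> adj v (b k) -> False.
Proof.
  intros Hv Hav Hvb. destruct last_agreement as [i0 [Hi0 [Heq Hne]]].
  set (m := (k - i0)%nat).
  set (c j := if (j <=? m)%nat then a (i0 + j)%nat
              else if (j =? S m)%nat then v else b (i0 + (2 * m + 2) - j)%nat).
  apply tree_acyclic, (has_cycle_of_path V adj c (2 * m + 2)); [lia | | |].
  - intros i j Hi Hj Hc. unfold c in Hc.
    destruct (Nat.leb_spec i m); destruct (Nat.leb_spec j m);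
      destruct (Nat.eqb_spec i (S m)); destruct (Nat.eqb_spec j (S m)); try lia;
    match type of Hc with ?x = ?y => assert (Hd : gdist adj w x = gdist adj w y) by congruence end;
    repeat first [rewrite Ha_depth in Hd by lia | rewrite Hb_depth in Hd by lia | rewrite Hv in Hd];
    try lia.
    + exfalso. apply (Hne (i0 + i)%nat); [lia|]. rewrite Hc. f_equal. lia.
    + exfalso. apply (Hne (i0 + j)%nat); [lia|]. rewrite <- Hc. f_equal. lia.
  - intros i Hi. unfold c. destruct (Nat.leb_spec i m); destruct (Nat.leb_spec (S i) m);
      destruct (Nat.eqb_spec i (S m)); destruct (Nat.eqb_spec (S i) (S m)); try lia.
    + replace (i0 + S i)%nat with (S (i0 + i)) by lia. apply Ha; lia.
    + replace i with m by lia. replace (i0 + m)%nat with k by lia. auto.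
    + subst i. replace (i0 + (2 * m + 2) - S (S m))%nat with k by lia. auto.
    + replace (i0 + (2 * m + 2) - i)%nat with (S (i0 + (2 * m + 2) - S i)) by lia.
      apply tree_sym, Hb. lia.
  - unfold c. destruct (Nat.leb_spec (2 * m + 2 - 1) m); [lia|].
    destruct (Nat.eqb_spec (2 * m + 2 - 1) (S m)); [lia|].
    destruct (Nat.leb_spec 0 m); [|lia].
    replace (i0 + (2 * m + 2) - (2 * m + 2 - 1))%nat with (S i0) by lia.
    rewrite Nat.add_0_r, Heq. apply tree_sym, Hb. lia.
Qed.

End TwoGeodesics.

Section Rooted.
Variable w : V.
Local Notation depth := (gdist adj w).

Lemma adj_depth_le u v : adj u v -> (depth v <= S (depth u))%nat.
Proof. intros H. pose proof (gdist_triangle w u v). rewrite (gdist_adj u v H) in H0. lia. Qed.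

Lemma adj_depth_neq u v : adj u v -> depth u <> depth v.
Proof.
  intros Huv E.
  destruct (geodesic_walk w u) as [a [Ha0 [Hak [Ha Had]]]].
  destruct (geodesic_walk w v) as [b [Hb0 [Hbk [Hb Hbd]]]].
  rewrite <- E in Hbk, Hb, Hbd.
  apply (geodesic_ends_not_adjacent w a b (depth u)); auto; rewrite Hak, Hbk; auto.
  intros ->. exact (tree_irrefl v Huv).
Qed.

Lemma upper_neighbour_unique p1 p2 v : adj p1 v -> adj p2 v ->
  S (depth p1) = depth v -> S (depth p2) = depth v -> p1 = p2.
Proof.
  intros H1 H2 E1 E2. apply NNPP. intros Hne.
  destruct (geodesic_walk w p1) as [a [Ha0 [Hak [Ha Had]]]].
  destruct (geodesic_walk w p2) as [b [Hb0 [Hbk [Hb Hbd]]]].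
  assert (E : depth p2 = depth p1) by lia. rewrite E in Hbk, Hb, Hbd.
  apply (geodesic_ends_no_common_child w a b (depth p1) Ha0 Hb0 Ha Hb Had Hbd) with v;
    rewrite ?Hak, ?Hbk; auto using tree_sym.
Qed.

Definition parent v := epsilon (inhabits v) (fun p => adj v p /\ S (depth p) = depth v).

Lemma parent_spec v : (1 <= depth v)%nat -> adj v (parent v) /\ S (depth (parent v)) = depth v.
Proof.
  intros Hv. apply (epsilon_spec (inhabits v) (fun p => adj v p /\ S (depth p) = depth v)).
  destruct (geodesic_walk w v) as [a [Ha0 [Hak [Ha Had]]]].
  exists (a (depth v - 1)%nat). split.
  - apply tree_sym. pattern v at 2. rewrite <- Hak.
    replace (depth v) with (S (depth v - 1)) at 2 by lia. apply Ha. lia.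
  - rewrite Had; lia.
Qed.

Lemma parent_eq v p : adj v p -> S (depth p) = depth v -> p = parent v.
Proof.
  intros. destruct (parent_spec v ltac:(lia)).
  apply (upper_neighbour_unique p (parent v) v); auto using tree_sym.
Qed.

Definition ancestor j v := Nat.iter (depth v - j) parent v.

Lemma iter_parent_depth n v : (n <= depth v)%nat -> depth (Nat.iter n parent v) = (depth v - n)%nat.
Proof.
  revert v. induction n as [|n IH]; intros v Hn; simpl; [lia|].
  destruct (parent_spec (Nat.iter n parent v)) as [_ E]; rewrite IH in *; lia.
Qed.

Lemma ancestor_depth j v : (j <= depth v)%nat -> depth (ancestor j v) = j.
Proof. intros. unfold ancestor. rewrite iter_parent_depth; lia. Qed.

Lemma ancestor_ancestor i j v : (i <= j)%nat -> (j <= depth v)%nat ->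
  ancestor i (ancestor j v) = ancestor i v.
Proof.
  intros. unfold ancestor at 1. rewrite ancestor_depth by auto. unfold ancestor.
  rewrite <- Nat.iter_add. f_equal. lia.
Qed.

Lemma ancestor_root v : ancestor 0 v = w.
Proof. symmetry. apply gdist_eq0, ancestor_depth. lia. Qed.

Lemma gdist_ancestor j v : (j <= depth v)%nat -> (gdist adj v (ancestor j v) <= depth v - j)%nat.
Proof.
  intros Hj. unfold ancestor. generalize (depth v - j)%nat (Nat.le_sub_l (depth v) j).
  intros n. induction n as [|n IH]; intros Hn; simpl; [rewrite gdist_refl; lia|].
  destruct (parent_spec (Nat.iter n parent v)) as [Hadj _]; [rewrite iter_parent_depth; lia|].
  pose proof (gdist_triangle v (Nat.iter n parent v) (parent (Nat.iter n parent v))).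
  rewrite (gdist_adj _ _ Hadj) in H. specialize (IH ltac:(lia)). lia.
Qed.

Lemma ancestor_parent j v : (1 <= depth v)%nat -> (j <= depth v - 1)%nat ->
  ancestor j (parent v) = ancestor j v.
Proof.
  intros. destruct (parent_spec v H) as [_ E]. unfold ancestor.
  rewrite <- Nat.iter_succ_r. f_equal. lia.
Qed.

Lemma ancestor_agree_below a b i j : (i <= j)%nat -> (j <= depth a)%nat -> (j <= depth b)%nat ->
  ancestor j a = ancestor j b -> ancestor i a = ancestor i b.
Proof. intros. rewrite <- (ancestor_ancestor i j a), <- (ancestor_ancestor i j b) by auto. congruence. Qed.

Definition meet_depth a b := epsilon (inhabits 0%nat) (fun j =>
  (j <= Nat.min (depth a) (depth b))%nat /\ ancestor j a = ancestor j b /\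
  forall i, (j < i <= Nat.min (depth a) (depth b))%nat -> ancestor i a <> ancestor i b).

Lemma meet_depth_spec a b :
  (meet_depth a b <= Nat.min (depth a) (depth b))%nat /\
  ancestor (meet_depth a b) a = ancestor (meet_depth a b) b /\
  forall i, (meet_depth a b < i <= Nat.min (depth a) (depth b))%nat -> ancestor i a <> ancestor i b.
Proof.
  unfold meet_depth. apply epsilon_spec, last_below. now rewrite !ancestor_root.
Qed.

Lemma meet_depth_le a b : (meet_depth a b <= depth a)%nat /\ (meet_depth a b <= depth b)%nat.
Proof. destruct (meet_depth_spec a b) as [H _]. lia. Qed.

Lemma meet_depth_ancestor a b : ancestor (meet_depth a b) a = ancestor (meet_depth a b) b.
Proof. apply meet_depth_spec. Qed.

Lemma meet_depth_max a b j : (j <= depth a)%nat -> (j <= depth b)%nat ->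
  ancestor j a = ancestor j b -> (j <= meet_depth a b)%nat.
Proof.
  intros. destruct (meet_depth_spec a b) as [_ [_ Hmax]].
  destruct (le_lt_dec j (meet_depth a b)); auto. exfalso. apply (Hmax j); auto. lia.
Qed.

Definition path_length a b := (depth a + depth b - 2 * meet_depth a b)%nat.

Lemma gdist_le_path_length a b : (gdist adj a b <= path_length a b)%nat.
Proof.
  unfold path_length. destruct (meet_depth_le a b).
  pose proof (gdist_triangle a (ancestor (meet_depth a b) a) b).
  pose proof (gdist_ancestor (meet_depth a b) a ltac:(lia)).
  pose proof (gdist_ancestor (meet_depth a b) b ltac:(lia)) as Hb.
  rewrite <- meet_depth_ancestor, gdist_sym in Hb. lia.
Qed.

Lemma path_length_parent v b : (1 <= depth v)%nat ->
  (path_length v b <= S (path_length (parent v) b))%nat /\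
  (path_length (parent v) b <= S (path_length v b))%nat.
Proof.
  intros Hv. destruct (parent_spec v Hv) as [_ E]. unfold path_length.
  pose proof (meet_depth_le v b). pose proof (meet_depth_le (parent v) b).
  assert (Hanc : forall j, (j <= depth (parent v))%nat -> ancestor j (parent v) = ancestor j v)
    by (intros; apply ancestor_parent; lia).
  destruct (Nat.eq_dec (meet_depth v b) (depth v)) as [Eq|Ne].
  - assert (meet_depth (parent v) b = depth (parent v)); [|lia].
    apply Nat.le_antisymm; [lia|]. apply meet_depth_max; try lia. rewrite Hanc by lia.
    apply (ancestor_agree_below v b _ (meet_depth v b)); try lia. apply meet_depth_ancestor.
  - assert (meet_depth (parent v) b = meet_depth v b); [|lia].
    apply Nat.le_antisymm; apply meet_depth_max; try lia.
    + rewrite <- Hanc by lia. apply meet_depth_ancestor.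
    + rewrite Hanc by lia. apply meet_depth_ancestor.
Qed.

Lemma path_length_diag b : path_length b b = 0%nat.
Proof.
  unfold path_length. assert (meet_depth b b = depth b); [|lia].
  apply Nat.le_antisymm; [apply meet_depth_le | apply meet_depth_max; auto].
Qed.

(* Along an edge one endpoint is the parent of the other, so [path_length _ b] changes by at most one. *)
Lemma path_length_le_walk m a b : walk adj m a b -> (path_length a b <= m)%nat.
Proof.
  induction 1 as [b|m u v b Huv _ IH]; [rewrite path_length_diag; lia|].
  pose proof (adj_depth_le _ _ Huv). pose proof (adj_depth_le _ _ (tree_sym _ _ Huv)).
  pose proof (adj_depth_neq _ _ Huv).
  destruct (Nat.eq_dec (depth u) (S (depth v))).
  - assert (v = parent u) by (apply parent_eq; auto). subst v.
    pose proof (path_length_parent u b ltac:(lia)). lia.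
  - assert (u = parent v) by (apply parent_eq; auto using tree_sym; lia). subst u.
    pose proof (path_length_parent v b ltac:(lia)). lia.
Qed.

Lemma gdist_path_length a b : gdist adj a b = path_length a b.
Proof.
  apply Nat.le_antisymm; [apply gdist_le_path_length | apply path_length_le_walk, gdist_walk].
Qed.

End Rooted.

Lemma tree_gromov_min w a b c :
  (Nat.min (gdist adj w a + gdist adj w c - gdist adj a c)
           (gdist adj w c + gdist adj w b - gdist adj c b)
   <= gdist adj w a + gdist adj w b - gdist adj a b)%nat.
Proof.
  rewrite (gdist_path_length w a c), (gdist_path_length w c b), (gdist_path_length w a b).
  unfold path_length. pose proof (meet_depth_le w a b). pose proof (meet_depth_le w a c).
  pose proof (meet_depth_le w c b).
  assert (Nat.min (meet_depth w a c) (meet_depth w c b) <= meet_depth w a b)%nat; [|lia].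
  apply meet_depth_max; try lia.
  transitivity (ancestor w (Nat.min (meet_depth w a c) (meet_depth w c b)) c).
  - apply (ancestor_agree_below w a c _ (meet_depth w a c)); try lia. apply meet_depth_ancestor.
  - apply (ancestor_agree_below w c b _ (meet_depth w c b)); try lia. apply meet_depth_ancestor.
Qed.

Lemma tree_tripod w a b : exists c,
  (gdist adj w c + gdist adj c a = gdist adj w a)%nat /\
  (gdist adj w c + gdist adj c b = gdist adj w b)%nat /\
  (gdist adj c a + gdist adj c b = gdist adj a b)%nat.
Proof.
  set (j := meet_depth w a b). exists (ancestor w j a).
  destruct (meet_depth_le w a b). pose proof (meet_depth_ancestor w a b) as Hab.
  pose proof (ancestor_depth w j a ltac:(lia)).
  pose proof (gdist_ancestor w j a ltac:(lia)).
  pose proof (gdist_ancestor w j b ltac:(lia)). fold j in Hab. rewrite <- Hab in H3.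
  pose proof (gdist_triangle w (ancestor w j a) a).
  pose proof (gdist_triangle w (ancestor w j a) b).
  rewrite (gdist_sym a) in H2. rewrite (gdist_sym b) in H3.
  rewrite (gdist_path_length w a b). unfold path_length. fold j. lia.
Qed.

End Tree.

Definition zero_hyperbolic {Y : Type} (e : Y -> Y -> R) : Prop :=
  forall w a b c, Rmin (gromov e w a c) (gromov e w c b) <= gromov e w a b.

Definition has_tripods {Y : Type} (e : Y -> Y -> R) : Prop :=
  forall w a b, exists c, e w c + e c a = e w a /\ e w c + e c b = e w b /\ e c a + e c b = e a b.

Definition tree_metric {V : Type} (adj : V -> V -> Prop) (u v : V) : R := INR (gdist adj u v).

Section TreeMetric.
Variables (V : Type) (adj : V -> V -> Prop).
Hypothesis tree : is_tree adj.

Lemma tree_metric_is_metric : is_metric (tree_metric adj).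
Proof.
  unfold tree_metric. repeat split.
  - intros H. apply (gdist_eq0 V adj tree). apply INR_eq. exact H.
  - intros ->. rewrite gdist_refl; auto.
  - intros x y. rewrite gdist_sym; auto.
  - intros x y z. rewrite <- plus_INR. apply le_INR, gdist_triangle; auto.
Qed.

Lemma tree_metric_zero_hyperbolic : zero_hyperbolic (tree_metric adj).
Proof.
  intros w a b c. unfold gromov, tree_metric.
  pose proof (tree_gromov_min V adj tree w a b c) as Hmin.
  pose proof (gdist_triangle V adj tree a w c) as T1.
  pose proof (gdist_triangle V adj tree c w b) as T2.
  pose proof (gdist_triangle V adj tree a w b) as T3.
  rewrite (gdist_sym V adj tree a w) in T1, T3. rewrite (gdist_sym V adj tree c w) in T2.
  destruct (Nat.min_spec (gdist adj w a + gdist adj w c - gdist adj a c)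
                         (gdist adj w c + gdist adj w b - gdist adj c b)) as [[_ E]|[_ E]];
  rewrite E in Hmin; apply le_INR in Hmin; rewrite !minus_INR, !plus_INR in Hmin by lia;
  [eapply Rle_trans; [apply Rmin_l|] | eapply Rle_trans; [apply Rmin_r|]]; lra.
Qed.

Lemma tree_metric_has_tripods : has_tripods (tree_metric adj).
Proof.
  intros w a b. destruct (tree_tripod V adj tree w a b) as [c [E1 [E2 E3]]].
  exists c. unfold tree_metric. rewrite <- !plus_INR. repeat split; f_equal; auto.
Qed.

End TreeMetric.

Lemma fold_Rmin_le tl h x : In x (h :: tl) -> fold_right Rmin h tl <= x.
Proof.
  revert h x. induction tl as [|a tl IH]; intros h x Hx; simpl in *.
  - destruct Hx as [<-|[]]. lra.
  - destruct Hx as [<-|[<-|Hx]].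
    + eapply Rle_trans; [apply Rmin_r | apply IH; left; auto].
    + apply Rmin_l.
    + eapply Rle_trans; [apply Rmin_r | apply IH; right; auto].
Qed.

Lemma fold_Rmin_ge tl h m : (forall x, In x (h :: tl) -> m <= x) -> m <= fold_right Rmin h tl.
Proof.
  revert h. induction tl as [|a tl IH]; intros h H; simpl in *; [auto|].
  apply Rmin_glb; [auto | apply IH; intros x [<-|Hx]; auto].
Qed.

Lemma Rmin_list_le l x : In x l -> Rmin_list l <= x.
Proof. destruct l; [intros [] | apply fold_Rmin_le]. Qed.

Lemma Rmin_list_ge l m : l <> [] -> (forall x, In x l -> m <= x) -> m <= Rmin_list l.
Proof. destruct l; [congruence | intros _; apply fold_Rmin_ge]. Qed.

Definition cell_vertex {V : Type} (p : rpt V) : V :=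
  match p with RVert v => v | REdge u _ _ => u end.

Section Realization.
Variables (V : Type) (adj : V -> V -> Prop).
Hypothesis tree : is_tree adj.

Lemma rends_near_cell_vertex p : rvalid adj p -> forall a, In a (rends p) ->
  0 <= snd a <= 1 /\ (gdist adj (cell_vertex p) (fst a) <= 1)%nat.
Proof.
  destruct p as [v|u v t]; intros Hp a Ha; simpl in *.
  - destruct Ha as [<-|[]]. simpl. rewrite gdist_refl by auto. split; [lra|lia].
  - destruct Hp as [Huv Ht']. destruct Ha as [<-|[<-|[]]]; simpl.
    + rewrite gdist_refl by auto. split; [lra|lia].
    + rewrite gdist_adj by auto. split; [lra|lia].
Qed.

Lemma rends_cell_vertex p : rvalid adj p -> exists s, 0 <= s <= 1 /\ In (cell_vertex p, s) (rends p).
Proof.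
  destruct p as [v|u v t]; intros Hp; simpl in *.
  - exists 0. split; [lra | auto].
  - exists t. split; [lra | auto].
Qed.

Lemma rdist_via_vertices p q : rvalid adj p -> rvalid adj q ->
  let via := Rmin_list (flat_map (fun a => map (fun b => snd a + INR (gdist adj (fst a) (fst b)) + snd b)
                                              (rends q)) (rends p)) in
  tree_metric adj (cell_vertex p) (cell_vertex q) - 2 <= via <=
  tree_metric adj (cell_vertex p) (cell_vertex q) + 2.
Proof.
  intros Hp Hq via. unfold tree_metric.
  destruct (rends_cell_vertex p Hp) as [s [Hs Hps]].
  destruct (rends_cell_vertex q Hq) as [s' [Hs' Hqs]].
  set (l := flat_map _ (rends p)) in via.
  assert (Hin : In (s + INR (gdist adj (cell_vertex p) (cell_vertex q)) + s') l).
  { apply in_flat_map. exists (cell_vertex p, s). split; auto.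
    apply in_map_iff. exists (cell_vertex q, s'). auto. }
  split.
  - apply Rmin_list_ge; [intros E; rewrite E in Hin; destruct Hin|].
    intros x Hx. apply in_flat_map in Hx. destruct Hx as [a [Ha Hx]].
    apply in_map_iff in Hx. destruct Hx as [b [<- Hb]].
    destruct (rends_near_cell_vertex p Hp a Ha). destruct (rends_near_cell_vertex q Hq b Hb).
    pose proof (gdist_triangle V adj tree (cell_vertex p) (fst a) (cell_vertex q)).
    pose proof (gdist_triangle V adj tree (fst a) (fst b) (cell_vertex q)).
    rewrite (gdist_sym V adj tree (fst b)) in H4.
    assert (INR (gdist adj (cell_vertex p) (cell_vertex q)) <= INR (gdist adj (fst a) (fst b)) + 2);
      [|lra].
    replace 2 with (INR 2) by (simpl; lra). rewrite <- plus_INR. apply le_INR. lia.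
  - eapply Rle_trans; [apply Rmin_list_le, Hin | lra].
Qed.

Lemma rdist_cell_vertex (p q : rpoint adj) :
  tree_metric adj (cell_vertex (proj1_sig p)) (cell_vertex (proj1_sig q)) - 2 <= rdist adj p q <=
  tree_metric adj (cell_vertex (proj1_sig p)) (cell_vertex (proj1_sig q)) + 2.
Proof.
  destruct p as [p Hp], q as [q Hq]. unfold rdist. simpl.
  pose proof (rdist_via_vertices p q Hp Hq) as Hvia. simpl in Hvia.
  destruct p as [v|u v t]; destruct q as [v'|u' v' t']; unfold rdist0; try exact Hvia.
  destruct (excluded_middle_informative (u = u' /\ v = v')) as [[<- <-]|].
  - simpl in *. unfold tree_metric in *. rewrite gdist_refl in * by auto. simpl in *. split.
    + apply Rmin_glb; [lra|]. pose proof (Rabs_pos (t - t')). lra.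
    + eapply Rle_trans; [apply Rmin_l | lra].
  - destruct (excluded_middle_informative (u = v' /\ v = u')) as [[<- <-]|]; [|exact Hvia].
    simpl in *. destruct Hp as [Huv _]. unfold tree_metric in *.
    rewrite gdist_adj in * by auto. simpl in *. split.
    + apply Rmin_glb; [lra|]. pose proof (Rabs_pos (t - (1 - t'))). lra.
    + eapply Rle_trans; [apply Rmin_l | lra].
Qed.

End Realization.

Definition chain_condition {X : Type} (d : X -> X -> R) (A : R) : Prop :=
  forall (n : nat) (x : nat -> X), (2 <= n)%nat ->
    gromov d (x 0%nat) (x 1%nat) (x n) >=
      minfrom1 (fun i => gromov d (x 0%nat) (x i) (x (S i))) (n - 2) - A.

Lemma minfrom1_le f k j : (1 <= j <= S k)%nat -> minfrom1 f k <= f j.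
Proof.
  revert j. induction k as [|k IH]; intros j Hj; simpl.
  - replace j with 1%nat by lia. lra.
  - destruct (Nat.eq_dec j (S (S k))) as [->|]; [apply Rmin_r|].
    eapply Rle_trans; [apply Rmin_l | apply IH; lia].
Qed.

Lemma minfrom1_ge f k t : (forall j, (1 <= j <= S k)%nat -> t <= f j) -> t <= minfrom1 f k.
Proof.
  induction k as [|k IH]; intros Hf; simpl; [apply Hf; lia|].
  apply Rmin_glb; [apply IH; intros; apply Hf; lia | apply Hf; lia].
Qed.

Lemma Rdiv_le_one a b : 0 < b -> a <= b -> a / b <= 1.
Proof.
  intros Hb Hab. apply Rmult_le_reg_r with b; auto.
  unfold Rdiv. rewrite Rmult_assoc, Rinv_l, Rmult_1_r, Rmult_1_l by lra. exact Hab.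
Qed.

Section ZeroHyperbolic.
Variables (Y : Type) (e : Y -> Y -> R).
Hypothesis hmet : is_metric e.
Hypothesis hyp : zero_hyperbolic e.

Lemma chain_gromov_min w (z : nat -> Y) m : (1 <= m)%nat ->
  exists i, (i < m)%nat /\ gromov e w (z i) (z (S i)) <= gromov e w (z 0%nat) (z m).
Proof.
  intros Hm. induction m as [|m IH]; [lia|].
  destruct (Nat.eq_dec m 0) as [->|]; [exists 0%nat; split; [lia | lra]|].
  destruct IH as [i [Hi Hle]]; [lia|].
  pose proof (hyp w (z 0%nat) (z (S m)) (z m)).
  destruct (Rle_dec (gromov e w (z 0%nat) (z m)) (gromov e w (z m) (z (S m)))).
  - rewrite Rmin_left in H by auto. exists i. split; [lia | lra].
  - rewrite Rmin_right in H by lra. exists m. split; [lia | lra].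
Qed.

Lemma chain_passes_near w (z : nat -> Y) J m : 0 <= J ->
  (forall j, (j < m)%nat -> e (z j) (z (S j)) <= J) ->
  exists j, (j <= m)%nat /\ e w (z j) <= gromov e w (z 0%nat) (z m) + J.
Proof.
  intros HJ. induction m as [|m IH]; intros Hstep.
  - exists 0%nat. split; auto. rewrite gromov_diag by auto. lra.
  - destruct IH as [j [Hj Hle]]; [intros; apply Hstep; lia|].
    pose proof (hyp w (z 0%nat) (z (S m)) (z m)).
    destruct (Rle_dec (gromov e w (z 0%nat) (z m)) (gromov e w (z m) (z (S m)))).
    + rewrite Rmin_left in H by auto. exists j. split; [lia | lra].
    + rewrite Rmin_right in H by lra. exists m. split; [lia|].
      pose proof (gromov_ge_dist_sub Y e hmet w (z m) (z (S m))).
      pose proof (Hstep m ltac:(lia)). lra.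
Qed.

End ZeroHyperbolic.

Definition morse_const (L C : R) : R := L * (2 * L * (L + C) + C) + C + (L + C).
Definition fellow_const (L C : R) : R := L * (morse_const L C + (L + C)) + C.

Section QuasiIsometricEmbedding.
Variables (X : Type) (d : X -> X -> R).
Hypothesis hmet : is_metric d.
Hypothesis hgeo : geodesic d.
Variables (Y : Type) (e : Y -> Y -> R).
Hypothesis hmet_e : is_metric e.
Hypothesis hyp_e : zero_hyperbolic e.
Hypothesis tripods_e : has_tripods e.
Variables (g : X -> Y) (L C : R).
Hypotheses (HL : 1 <= L) (HC : 0 <= C).
Hypothesis g_upper : forall x y, e (g x) (g y) <= L * d x y + C.
Hypothesis g_lower : forall x y, d x y <= L * e (g x) (g y) + C.

Lemma fellow_const_nonneg : 0 <= fellow_const L C.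
Proof.
  unfold fellow_const, morse_const.
  assert (0 <= L * (2 * L * (L + C) + C)) by (apply Rmult_le_pos; nra).
  assert (0 <= L * (L * (2 * L * (L + C) + C) + C + (L + C) + (L + C))) by (apply Rmult_le_pos; nra).
  lra.
Qed.

(* Sample the geodesic at [N] equally spaced points with [N >= |s2 - s1|]: consecutive images
   are then at distance at most [L + C]. *)
Lemma geodesic_image_passes_near gm l s1 s2 w : geodesic_path d gm l ->
  0 <= s1 <= l -> 0 <= s2 <= l ->
  exists t, (s1 <= t <= s2 \/ s2 <= t <= s1) /\
    e w (g (gm t)) <= gromov e w (g (gm s1)) (g (gm s2)) + (L + C).
Proof.
  intros Hg H1 H2. destruct (INR_unbounded (Rabs (s2 - s1))) as [n Hn].
  set (N := S n). assert (HN : 0 < INR N) by (apply lt_0_INR; unfold N; lia).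
  assert (HN2 : Rabs (s2 - s1) <= INR N) by (unfold N; rewrite S_INR; lra).
  set (tt j := s1 + (s2 - s1) * (INR j / INR N)).
  assert (Hfrac : forall j, (j <= N)%nat -> 0 <= INR j / INR N <= 1).
  { intros j Hj. apply le_INR in Hj. split.
    - apply Rmult_le_pos; [apply pos_INR | left; apply Rinv_0_lt_compat; lra].
    - apply Rdiv_le_one; lra. }
  assert (Hbetween : forall j, (j <= N)%nat -> s1 <= tt j <= s2 \/ s2 <= tt j <= s1).
  { intros j Hj. specialize (Hfrac j Hj). unfold tt. destruct (Rle_dec s1 s2); [left|right]; split; nra. }
  assert (Hrange : forall j, (j <= N)%nat -> 0 <= tt j <= l)
    by (intros j Hj; destruct (Hbetween j Hj); lra).
  destruct (chain_passes_near Y e hmet_e hyp_e w (fun j => g (gm (tt j))) (L + C) N) as [j [Hj Hnear]].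
  - lra.
  - intros j Hj. eapply Rle_trans; [apply g_upper|]. rewrite Hg by (apply Hrange; lia).
    assert (Rabs (tt j - tt (S j)) <= 1); [|nra].
    unfold tt. rewrite S_INR.
    replace (s1 + (s2 - s1) * (INR j / INR N) - (s1 + (s2 - s1) * ((INR j + 1) / INR N)))
      with (- ((s2 - s1) / INR N)) by (field; lra).
    unfold Rdiv. rewrite Rabs_Ropp, Rabs_mult, Rabs_inv, (Rabs_right (INR N)) by lra.
    apply Rdiv_le_one; lra.
  - exists (tt j). split; [apply Hbetween; auto|]. cbv beta in Hnear.
    replace (tt 0%nat) with s1 in Hnear by (unfold tt; rewrite INR_0; unfold Rdiv; ring).
    replace (tt N) with s2 in Hnear by (unfold tt; field; lra). exact Hnear.
Qed.

(* The tripod centre [c] of [g (gm s)], [g (gm 0)], [g (gm l)] is within [L + C] of the images of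
   both subsegments; the two witnesses are therefore close in [X], forcing them near [gm s]. *)
Lemma geodesic_image_tripod gm l s : geodesic_path d gm l -> 0 <= s <= l ->
  gromov e (g (gm s)) (g (gm 0)) (g (gm l)) <= morse_const L C.
Proof.
  intros Hg Hs.
  set (w := g (gm s)). set (a := g (gm 0)). set (b := g (gm l)).
  destruct (tripods_e w a b) as [c [E1 [E2 E3]]].
  destruct (geodesic_image_passes_near gm l s 0 c Hg ltac:(lra) ltac:(lra)) as [t1 [Ht1 Hc1]].
  destruct (geodesic_image_passes_near gm l s l c Hg ltac:(lra) ltac:(lra)) as [t2 [Ht2 Hc2]].
  fold w a b in Hc1, Hc2.
  assert (G1 : gromov e c w a = 0) by (unfold gromov; rewrite (metric_sym Y e hmet_e c w); lra).
  assert (G2 : gromov e c w b = 0) by (unfold gromov; rewrite (metric_sym Y e hmet_e c w); lra).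
  rewrite G1 in Hc1. rewrite G2 in Hc2.
  assert (Ht12 : e (g (gm t1)) (g (gm t2)) <= 2 * (L + C)).
  { pose proof (metric_triangle Y e hmet_e (g (gm t1)) c (g (gm t2))).
    rewrite (metric_sym Y e hmet_e _ c) in H. lra. }
  assert (Hd12 : t2 - t1 <= L * (2 * (L + C)) + C).
  { replace (t2 - t1) with (d (gm t1) (gm t2)) by (rewrite Hg, Rabs_left1 by lra; lra).
    eapply Rle_trans; [apply g_lower|]. apply Rplus_le_compat_r, Rmult_le_compat_l; lra. }
  assert (Hwc : e w c <= L * (s - t1) + C + (L + C)).
  { pose proof (metric_triangle Y e hmet_e w (g (gm t1)) c).
    rewrite (metric_sym Y e hmet_e (g (gm t1)) c) in H.
    pose proof (g_upper (gm s) (gm t1)). rewrite Hg, Rabs_right in H0 by lra. unfold w in *. lra. }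
  assert (L * (s - t1) <= L * (2 * L * (L + C) + C)) by (apply Rmult_le_compat_l; lra).
  unfold gromov, morse_const. lra.
Qed.

Lemma chain_meets_geodesic gm l s (y : nat -> X) m : geodesic_path d gm l -> 0 <= s <= l ->
  (1 <= m)%nat -> y 0%nat = gm 0 -> y m = gm l ->
  exists i q, (i < m)%nat /\ d (y i) q + d q (y (S i)) = d (y i) (y (S i)) /\
    d (gm s) q <= fellow_const L C.
Proof.
  intros Hg Hs Hm Hy0 Hym. set (w := g (gm s)).
  destruct (chain_gromov_min Y e hyp_e w (fun i => g (y i)) m Hm) as [i [Hi Hle]].
  cbv beta in Hle. rewrite Hy0, Hym in Hle.
  pose proof (geodesic_image_tripod gm l s Hg Hs). fold w in H.
  destruct (hgeo (y i) (y (S i))) as [gi [Gi0 [Gi1 Hgi]]].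
  pose proof (metric_nonneg X d hmet (y i) (y (S i))).
  destruct (geodesic_image_passes_near gi _ 0 (d (y i) (y (S i))) w Hgi ltac:(lra) ltac:(lra))
    as [t [Ht Hnear]].
  rewrite Gi0, Gi1 in Hnear.
  destruct (geodesic_path_dist d gi _ t Hgi ltac:(lra)) as [E1 E2]. rewrite Gi0, Gi1 in *.
  exists i, (gi t). repeat split; auto; [lra|].
  eapply Rle_trans; [apply g_lower|]. fold w.
  unfold fellow_const. apply Rplus_le_compat_r, Rmult_le_compat_l; lra.
Qed.

Lemma geodesic_center_near o a b gm : geodesic_path d gm (d a b) -> gm 0 = a -> gm (d a b) = b ->
  let s := (d a b + d a o - d b o) / 2 in
  0 <= s <= d a b /\ d o (gm s) <= gromov d o a b + 2 * fellow_const L C.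
Proof.
  intros Hg G0 G1 s.
  pose proof (metric_triangle X d hmet a o b). pose proof (metric_triangle X d hmet b a o).
  pose proof (metric_triangle X d hmet a b o).
  rewrite (metric_sym X d hmet b a) in H0. rewrite (metric_sym X d hmet o b) in H.
  assert (Hs : 0 <= s <= d a b) by (unfold s; lra). split; auto.
  destruct (geodesic_path_dist d gm _ s Hg Hs) as [Has Hsb]. rewrite G0, G1 in *.
  destruct (chain_meets_geodesic gm _ s (fun i => match i with 0%nat => a | 1%nat => o | _ => b end) 2
              Hg Hs ltac:(lia) (eq_sym G0) (eq_sym G1)) as [i [q [Hi [Hq Hnear]]]].
  pose proof (metric_triangle X d hmet o q (gm s)). pose proof (metric_triangle X d hmet a q (gm s)).
  pose proof (metric_triangle X d hmet (gm s) q b).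
  rewrite (metric_sym X d hmet q (gm s)) in H2, H3.
  unfold gromov. rewrite (metric_sym X d hmet o a), (metric_sym X d hmet o b).
  destruct i as [|[|i]]; try lia; simpl in Hq.
  - rewrite (metric_sym X d hmet q o) in Hq. unfold s in *. lra.
  - rewrite (metric_sym X d hmet o b) in Hq. unfold s in *. lra.
Qed.

Lemma qi_embedded_chain_condition : chain_condition d (3 * fellow_const L C).
Proof.
  intros n x Hn. set (o := x 0%nat). set (a := x 1%nat). set (b := x n).
  destruct (hgeo a b) as [gm [G0 [G1 Hg]]].
  destruct (geodesic_center_near o a b gm Hg G0 G1) as [Hs Hcenter].
  set (p := gm ((d a b + d a o - d b o) / 2)) in Hcenter.
  destruct (chain_meets_geodesic gm _ ((d a b + d a o - d b o) / 2) (fun i => x (S i)) (n - 1)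
              Hg Hs ltac:(lia) (eq_sym G0)) as [i [q [Hi [Hq Hnear]]]].
  { rewrite G1. unfold b. f_equal. lia. }
  cbv beta in Hq. fold p in Hnear.
  pose proof (gromov_le_between X d hmet o _ _ q Hq).
  pose proof (minfrom1_le (fun i => gromov d o (x i) (x (S i))) (n - 2) (S i) ltac:(lia)).
  pose proof (metric_triangle X d hmet o p q). cbv beta in H0. lra.
Qed.

End QuasiIsometricEmbedding.

Lemma quasi_isometry_cell_vertices {X V : Type} (d : X -> X -> R) (adj : V -> V -> Prop)
  (f : X -> rpoint adj) L C : is_tree adj -> quasi_isometry d (rdist adj) f L C ->
  let g x := cell_vertex (proj1_sig (f x)) in
  (forall x y, tree_metric adj (g x) (g y) <= L * d x y + (L * (C + 2) + C + 2)) /\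
  (forall x y, d x y <= L * tree_metric adj (g x) (g y) + (L * (C + 2) + C + 2)).
Proof.
  intros tree [HL [HC [Hq _]]] g. split; intros x y;
    pose proof (rdist_cell_vertex V adj tree (f x) (f y)); destruct (Hq x y); fold (g x) (g y) in *.
  - assert (0 <= L * (C + 2)) by nra. lra.
  - assert (Hdiv : d x y / L <= tree_metric adj (g x) (g y) + 2 + C) by lra.
    apply Rmult_le_compat_l with (r := L) in Hdiv; [|lra].
    replace (L * (d x y / L)) with (d x y) in Hdiv by (field; lra). nra.
Qed.

Lemma quasi_tree_chain_condition {X : Type} (d : X -> X -> R) :
  is_metric d -> geodesic d -> quasi_tree d -> exists A, 0 <= A /\ chain_condition d A.
Proof.
  intros hmet hgeo [V [adj [tree [f [L [C HQ]]]]]].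
  destruct (quasi_isometry_cell_vertices d adj f L C tree HQ) as [Hup Hlo].
  destruct HQ as [HL [HC _]]. set (C' := L * (C + 2) + C + 2) in *.
  assert (HC' : 0 <= C') by (unfold C'; nra).
  exists (3 * fellow_const L C'). split.
  - pose proof (fellow_const_nonneg L C' HL HC'). lra.
  - apply (qi_embedded_chain_condition X d hmet hgeo V (tree_metric adj)
             (tree_metric_is_metric V adj tree) (tree_metric_zero_hyperbolic V adj tree)
             (tree_metric_has_tripods V adj tree) _ L C' HL HC' Hup Hlo).
Qed.

Definition nat_floor (r : R) : nat := Z.to_nat (Int_part r).

Lemma nat_floor_spec r : 0 <= r -> INR (nat_floor r) <= r < INR (nat_floor r) + 1.
Proof.
  intros Hr. destruct (base_Int_part r) as [Hle Hgt].
  assert (Hnn : (0 <= Int_part r)%Z) by (enough (-1 < Int_part r)%Z by lia; apply lt_IZR; lra).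
  unfold nat_floor. rewrite INR_IZR_INZ, Z2Nat.id by exact Hnn. lra.
Qed.

Lemma nat_floor_unique r k : INR k <= r < INR k + 1 -> nat_floor r = k.
Proof.
  intros Hk. destruct (nat_floor_spec r) as [Hlo Hhi]; [pose proof (pos_INR k); lra|].
  destruct (lt_eq_lt_dec (nat_floor r) k) as [[Hlt|]|Hlt]; auto;
    apply le_INR in Hlt; rewrite S_INR in Hlt; lra.
Qed.

Lemma nat_floor_div_spec r w : 0 <= r -> 0 < w ->
  INR (nat_floor (r / w)) * w <= r < (INR (nat_floor (r / w)) + 1) * w.
Proof.
  intros Hr Hw. destruct (nat_floor_spec (r / w)) as [Hlo Hhi].
  - apply Rmult_le_pos; [lra | left; apply Rinv_0_lt_compat; lra].
  - replace r with (r / w * w) at 2 3 by (field; lra). split; nra.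
Qed.

Lemma nat_floor_div_unique r w k : 0 < w -> INR k * w <= r < (INR k + 1) * w ->
  nat_floor (r / w) = k.
Proof.
  intros Hw [Hlo Hhi]. apply nat_floor_unique. split.
  - apply Rmult_le_reg_r with w; auto. replace (r / w * w) with r by (field; lra). lra.
  - apply Rmult_lt_reg_r with w; auto. replace (r / w * w) with r by (field; lra). lra.
Qed.

Section ChainConditionTree.
Variables (X : Type) (d : X -> X -> R).
Hypothesis hmet : is_metric d.
Hypothesis hgeo : geodesic d.
Variable A : R.
Hypothesis HA : 0 <= A.
Hypothesis hchain : chain_condition d A.
Variable o : X.

(* Any width above [2 * A] works: it absorbs the loss [A] of one use of the chain condition
   between consecutive levels. *)
Definition width := 2 * A + 1.
Definition threshold k := INR k * width - A.
Definition level x := nat_floor (d o x / width).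

Lemma width_pos : 0 < width.
Proof. unfold width. lra. Qed.

Lemma level_spec x : INR (level x) * width <= d o x < (INR (level x) + 1) * width.
Proof. apply nat_floor_div_spec; [apply metric_nonneg; auto | apply width_pos]. Qed.

Lemma level_unique x k : INR k * width <= d o x < (INR k + 1) * width -> level x = k.
Proof. apply nat_floor_div_unique, width_pos. Qed.

Lemma level_ge x j : INR j * width <= d o x -> (j <= level x)%nat.
Proof.
  intros H. pose proof (level_spec x). pose proof width_pos.
  assert (INR j < INR (S (level x))) by (rewrite S_INR; nra).
  apply INR_lt in H2. lia.
Qed.

Lemma level_base : level o = 0%nat.
Proof. apply level_unique. rewrite metric_refl by auto. simpl. pose proof width_pos. lra. Qed.

Lemma chain_gromov_lower n (z : nat -> X) t : (2 <= n)%nat ->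
  (forall i, (1 <= i < n)%nat -> t <= gromov d o (z i) (z (S i))) ->
  t - A <= gromov d o (z 1%nat) (z n).
Proof.
  intros Hn Hz. set (x i := match i with 0%nat => o | _ => z i end).
  pose proof (hchain n x Hn) as H.
  assert (t <= minfrom1 (fun i => gromov d (x 0%nat) (x i) (x (S i))) (n - 2)); [|destruct n; [lia|]; simpl in *; lra].
  apply minfrom1_ge. intros [|j] Hj; [lia|]. apply Hz. lia.
Qed.

Definition linked k x y := exists n (z : nat -> X), (1 <= n)%nat /\ z 1%nat = x /\ z n = y /\
  forall i, (1 <= i < n)%nat -> threshold k <= gromov d o (z i) (z (S i)).

Lemma linked_refl k x : linked k x x.
Proof. exists 1%nat, (fun _ => x). repeat split; auto. lia. Qed.

Lemma linked_of_gromov k x y : threshold k <= gromov d o x y -> linked k x y.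
Proof.
  intros. exists 2%nat, (fun i => match i with 1%nat => x | _ => y end). repeat split; auto.
  intros i Hi. replace i with 1%nat by lia. auto.
Qed.

Lemma linked_sym k x y : linked k x y -> linked k y x.
Proof.
  intros [n [z [Hn [H1 [Hn' Hz]]]]]. exists n, (fun i => z (n + 1 - i)%nat).
  repeat split; auto.
  - now replace (n + 1 - 1)%nat with n by lia.
  - now replace (n + 1 - n)%nat with 1%nat by lia.
  - intros i Hi. rewrite gromov_sym by auto.
    replace (n + 1 - i)%nat with (S (n - i)) by lia.
    replace (n + 1 - S i)%nat with (n - i)%nat by lia. apply Hz. lia.
Qed.

Lemma linked_trans k x y v : linked k x y -> linked k y v -> linked k x v.
Proof.
  intros [n1 [z1 [Hn1 [H11 [H12 Hz1]]]]] [n2 [z2 [Hn2 [H21 [H22 Hz2]]]]].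
  exists (n1 + n2 - 1)%nat, (fun i => if (i <=? n1)%nat then z1 i else z2 (i - n1 + 1)%nat).
  repeat split; [lia | destruct (Nat.leb_spec 1 n1); [auto | lia] | |].
  - destruct (Nat.leb_spec (n1 + n2 - 1) n1).
    + replace n2 with 1%nat in * by lia. rewrite Nat.add_sub. congruence.
    + rewrite <- H22. f_equal. lia.
  - intros i Hi. destruct (Nat.leb_spec i n1); destruct (Nat.leb_spec (S i) n1); try lia.
    + apply Hz1; lia.
    + replace i with n1 by lia. rewrite H12, <- H21.
      replace (S n1 - n1 + 1)%nat with 2%nat by lia. apply Hz2; lia.
    + replace (S i - n1 + 1)%nat with (S (i - n1 + 1)) by lia. apply Hz2; lia.
Qed.

Lemma linked_gromov k x y : level x = k -> linked k x y -> threshold k - A <= gromov d o x y.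
Proof.
  intros Hl [n [z [Hn [H1 [Hn' Hz]]]]]. subst.
  destruct (Nat.eq_dec n 1) as [->|].
  - rewrite gromov_diag by auto. pose proof (level_spec (z 1%nat)). unfold threshold. lra.
  - apply chain_gromov_lower; auto. lia.
Qed.

(* A vertex of level [k] is the [linked k]-class of a point of level [k]; the level is stored
   explicitly so that it can be read off without choosing a representative. *)
Definition level_class k x : X -> Prop := fun y => level y = k /\ linked k x y.
Definition is_vertex (p : nat * (X -> Prop)) := exists x, level x = fst p /\ snd p = level_class (fst p) x.
Definition vertex := { p : nat * (X -> Prop) | is_vertex p }.
Definition vertex_of (x : X) : vertex :=
  exist is_vertex (level x, level_class (level x) x) (ex_intro _ x (conj eq_refl eq_refl)).
Definition vertex_level (U : vertex) := fst (proj1_sig U).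

Lemma vertex_of_surj (U : vertex) : exists x, vertex_of x = U.
Proof.
  destruct U as [[k P] [x [Hk HP]]]. simpl in *. exists x.
  apply subset_eq_compat. now subst.
Qed.

Lemma vertex_of_inv x y : vertex_of x = vertex_of y -> level x = level y /\ linked (level x) x y.
Proof.
  intros H. apply EqdepFacts.eq_sig_fst in H. injection H as Hl Hcls. split; auto.
  assert (Hy : level_class (level x) x y) by (rewrite Hcls; split; auto; apply linked_refl).
  apply Hy.
Qed.

Lemma vertex_of_eq x y : level x = level y -> linked (level x) x y -> vertex_of x = vertex_of y.
Proof.
  intros Hl Hxy. apply subset_eq_compat. rewrite <- Hl. f_equal.
  apply functional_extensionality. intros z. apply propositional_extensionality.
  unfold level_class. split; intros [Hz Hlink]; split; auto.
  - eapply linked_trans; [apply linked_sym|]; eauto.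
  - eapply linked_trans; eauto.
Qed.

Definition parent_vertex (U W : vertex) := exists x z, vertex_of x = U /\ vertex_of z = W /\
  d o z + d z x = d o x /\ level x = S (level z).
Definition vadj (U W : vertex) := parent_vertex U W \/ parent_vertex W U.

Lemma parent_vertex_level U W : parent_vertex U W -> vertex_level U = S (vertex_level W).
Proof. intros [x [z [<- [<- [_ H]]]]]. exact H. Qed.

Lemma vadj_sym U W : vadj U W -> vadj W U.
Proof. intros [H|H]; [right|left]; auto. Qed.

Lemma parent_point_exists x : (1 <= level x)%nat ->
  exists z, d o z + d z x = d o x /\ level x = S (level z).
Proof.
  intros Hx. pose proof (level_spec x). pose proof width_pos.
  assert (E : INR (level x) = INR (level x - 1) + 1) by (rewrite <- S_INR; f_equal; lia).
  destruct (geodesic_point X d o x (INR (level x - 1) * width) hgeo) as [z [Hz1 Hz2]].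
  { split; [apply Rmult_le_pos; [apply pos_INR | lra] | nra]. }
  exists z. split; [lra|].
  assert (level z = (level x - 1)%nat) by (apply level_unique; rewrite Hz1; nra). lia.
Qed.

(* Two parents [z1], [z2] of one class are linked at their own level [k] through the chain
   [z1, x1, x2, z2]: the middle product is large since [x1], [x2] are linked at level [k + 1]. *)
Lemma parent_vertex_unique U W1 W2 : parent_vertex U W1 -> parent_vertex U W2 -> W1 = W2.
Proof.
  intros [x1 [z1 [<- [<- [Hg1 Hl1]]]]] [x2 [z2 [Hx [<- [Hg2 Hl2]]]]].
  symmetry in Hx. apply vertex_of_inv in Hx. destruct Hx as [Hl Hlink].
  apply linked_gromov in Hlink; auto.
  assert (Lz : level z1 = level z2) by lia.
  pose proof (level_spec z1). pose proof (level_spec z2). pose proof width_pos.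
  set (k := level z1) in *.
  apply vertex_of_eq; auto. apply linked_of_gromov. unfold threshold. fold k.
  apply (chain_gromov_lower 4 (fun i => match i with 1%nat => z1 | 2%nat => x1 | 3%nat => x2 | _ => z2 end));
    [lia|]. intros i Hi.
  destruct i as [|[|[|[|i]]]]; try lia; simpl.
  - rewrite gromov_between_base by auto. lra.
  - unfold threshold in Hlink. rewrite Hl1, S_INR in Hlink. fold k in Hlink. unfold width in *. lra.
  - rewrite gromov_sym, gromov_between_base by auto. rewrite <- Lz in *. lra.
Qed.

Lemma walk_to_base k x : level x = k -> walk vadj k (vertex_of x) (vertex_of o).
Proof.
  revert x. induction k as [|k IH]; intros x Hx.
  - replace (vertex_of x) with (vertex_of o); [constructor|].
    apply vertex_of_eq; rewrite level_base; auto. apply linked_of_gromov.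
    unfold threshold. simpl. pose proof (gromov_nonneg X d hmet o o x). lra.
  - destruct (parent_point_exists x ltac:(lia)) as [z [Hz1 Hz2]].
    apply (walkS _ _ _ (vertex_of z)); [left; exists x, z; auto | apply IH; lia].
Qed.

Lemma vadj_tree : is_tree vadj.
Proof.
  repeat split.
  - apply vadj_sym.
  - intros U [H|H]; apply parent_vertex_level in H; lia.
  - intros U W. destruct (vertex_of_surj U) as [x <-]. destruct (vertex_of_surj W) as [y <-].
    exists (level x + level y)%nat. eapply walk_app; [apply walk_to_base; auto|].
    apply walk_rev; [apply vadj_sym | apply walk_to_base; auto].
  - apply (no_cycle_of_unique_parent _ _ vertex_level parent_vertex); auto.
    + apply parent_vertex_level.
    + apply parent_vertex_unique.
Qed.

(* The points at distance [i * width] from [o] on a geodesic [o x] have level [i], and each is a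
   parent of the next. *)
Lemma ancestor_walk x j : (j <= level x)%nat -> exists a, level a = j /\ d o a = INR j * width /\
  d o a + d a x = d o x /\ walk vadj (level x - j) (vertex_of x) (vertex_of a).
Proof.
  intros Hj. destruct (hgeo o x) as [gm [G0 [G1 Hg]]].
  pose proof (level_spec x). pose proof width_pos.
  set (a i := gm (INR i * width)).
  assert (Hr : forall i, (i <= level x)%nat -> 0 <= INR i * width <= d o x).
  { intros i Hi. apply le_INR in Hi. split; [apply Rmult_le_pos; [apply pos_INR | lra] | nra]. }
  assert (Ha : forall i, (i <= level x)%nat -> d o (a i) = INR i * width /\
                                            d o (a i) + d (a i) x = d o x).
  { intros i Hi. destruct (geodesic_path_dist d gm _ _ Hg (Hr i Hi)) as [E1 E2].
    rewrite G0 in E1. rewrite G1 in E2. unfold a. lra. }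
  assert (Hlev : forall i, (i <= level x)%nat -> level (a i) = i)
    by (intros i Hi; apply level_unique; rewrite (proj1 (Ha i Hi)); lra).
  assert (Hpar : forall i, (S i <= level x)%nat -> parent_vertex (vertex_of (a (S i))) (vertex_of (a i))).
  { intros i Hi. exists (a (S i)), (a i). repeat split; [| rewrite !Hlev by lia; auto].
    rewrite (proj1 (Ha (S i) ltac:(lia))), (proj1 (Ha i ltac:(lia))). unfold a. rewrite Hg by (apply Hr; lia).
    rewrite S_INR, Rabs_left1; lra. }
  assert (Htop : vertex_of (a (level x)) = vertex_of x).
  { apply vertex_of_eq; [apply Hlev; auto|]. rewrite Hlev by auto. apply linked_of_gromov.
    unfold threshold. rewrite gromov_between_base by (auto; apply Ha; auto).
    rewrite (proj1 (Ha _ (Nat.le_refl _))). lra. }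
  exists (a j). rewrite Hlev by auto. destruct (Ha j Hj) as [Hd Hb]. repeat split; auto.
  pose proof (path_walk0 vertex vadj (fun i => vertex_of (a (level x - i)%nat)) (level x - j)) as W.
  cbv beta in W. rewrite Nat.sub_0_r, Htop in W. replace (level x - (level x - j))%nat with j in W by lia.
  apply W. intros i Hi. left. replace (level x - i)%nat with (S (level x - S i)) by lia. apply Hpar. lia.
Qed.

Lemma tree_metric_vertex_le x y :
  tree_metric vadj (vertex_of x) (vertex_of y) <= d x y / width + 2.
Proof.
  pose proof width_pos.
  set (j := nat_floor (gromov d o x y / width)).
  destruct (nat_floor_div_spec (gromov d o x y) width) as [Hjlo Hjhi];
    [apply gromov_nonneg; auto | auto |]. fold j in Hjlo, Hjhi.
  pose proof (gromov_le_dist X d hmet o x y). pose proof (gromov_le_dist X d hmet o y x).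
  rewrite gromov_sym in H1 by auto.
  destruct (ancestor_walk x j (level_ge x j ltac:(lra))) as [ax [Lx [Dx [Gx Wx]]]].
  destruct (ancestor_walk y j (level_ge y j ltac:(lra))) as [ay [Ly [Dy [Gy Wy]]]].
  assert (Vxy : vertex_of ax = vertex_of ay).
  { apply vertex_of_eq; [congruence|]. rewrite Lx. apply linked_of_gromov. unfold threshold.
    apply (chain_gromov_lower 4 (fun i => match i with 1%nat => ax | 2%nat => x | 3%nat => y | _ => ay end));
      [lia|]. intros i Hi.
    destruct i as [|[|[|[|i]]]]; try lia; simpl.
    - rewrite gromov_between_base by auto. lra.
    - lra.
    - rewrite gromov_sym, gromov_between_base by auto. lra. }
  rewrite Vxy in Wx.
  pose proof (gdist_le_walk vertex vadj vadj_tree _ _ _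
                (walk_app _ _ _ _ _ _ _ Wx (walk_rev _ _ vadj_sym _ _ _ Wy))) as W.
  apply le_INR in W. rewrite plus_INR, !minus_INR in W by (apply level_ge; lra).
  pose proof (level_spec x). pose proof (level_spec y).
  assert (width * (INR (level x) + INR (level y) - 2 * INR j) <= d x y + 2 * width)
    by (unfold gromov in *; nra).
  assert (INR (level x) + INR (level y) - 2 * INR j <= d x y / width + 2); [|unfold tree_metric; lra].
  apply Rmult_le_reg_l with width; auto.
  replace (width * (d x y / width + 2)) with (d x y + 2 * width) by (field; lra). lra.
Qed.

Definition class_diam := 2 * width + 4 * A.
Definition edge_span := 2 * class_diam + 2 * width.

Lemma vertex_of_eq_close x y : vertex_of x = vertex_of y -> d x y <= class_diam.
Proof.
  intros H. apply vertex_of_inv in H. destruct H as [Hl Hlink].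
  apply linked_gromov in Hlink; auto.
  pose proof (level_spec x). pose proof (level_spec y). rewrite <- Hl in H0.
  unfold threshold, gromov, class_diam in *. lra.
Qed.

Lemma vadj_close U W x y : vadj U W -> vertex_of x = U -> vertex_of y = W -> d x y <= edge_span.
Proof.
  assert (Hspan : forall x1 z1, d o z1 + d z1 x1 = d o x1 -> level x1 = S (level z1) ->
            d z1 x1 <= 2 * width).
  { intros x1 z1 Hg Hl. pose proof (level_spec x1). pose proof (level_spec z1).
    rewrite Hl, S_INR in H. lra. }
  intros [[x1 [z1 [<- [<- [Hg Hl]]]]]|[x1 [z1 [<- [<- [Hg Hl]]]]]] Hx Hy;
    pose proof (Hspan _ _ Hg Hl); unfold edge_span.
  - pose proof (vertex_of_eq_close x x1 Hx). pose proof (vertex_of_eq_close z1 y (eq_sym Hy)).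
    pose proof (metric_triangle X d hmet x x1 y). pose proof (metric_triangle X d hmet x1 z1 y).
    rewrite (metric_sym X d hmet x1 z1) in *. lra.
  - pose proof (vertex_of_eq_close x z1 Hx). pose proof (vertex_of_eq_close x1 y (eq_sym Hy)).
    pose proof (metric_triangle X d hmet x z1 y). pose proof (metric_triangle X d hmet z1 x1 y). lra.
Qed.

Lemma dist_le_walk m U W : walk vadj m U W -> forall x y, vertex_of x = U -> vertex_of y = W ->
  d x y <= edge_span * INR m + class_diam.
Proof.
  induction 1 as [U|m U V W HUV _ IH]; intros x y Hx Hy.
  - rewrite Rmult_0_r, Rplus_0_l. apply vertex_of_eq_close. congruence.
  - destruct (vertex_of_surj V) as [z Hz].
    pose proof (vadj_close U V x z HUV Hx Hz). pose proof (IH z y Hz Hy).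
    pose proof (metric_triangle X d hmet x z y). rewrite S_INR. lra.
Qed.

Definition vertex_point (x : X) : rpoint vadj := exist (rvalid vadj) (RVert (vertex_of x)) I.

Lemma rdist_vertex_point x y :
  rdist vadj (vertex_point x) (vertex_point y) = tree_metric vadj (vertex_of x) (vertex_of y).
Proof. unfold rdist, rdist0, tree_metric. simpl. ring. Qed.

Lemma vertex_point_quasi_isometry :
  quasi_isometry d (rdist vadj) vertex_point (1 + edge_span + / width) (3 + class_diam).
Proof.
  pose proof width_pos. assert (HK : 0 <= class_diam) by (unfold class_diam; lra).
  assert (HE : 0 <= edge_span) by (unfold edge_span; lra).
  assert (Hi : 0 < / width) by (apply Rinv_0_lt_compat; lra).
  repeat split; try lra.
  - rewrite rdist_vertex_point.
    pose proof (dist_le_walk _ _ _ (gdist_walk vertex vadj vadj_tree (vertex_of x) (vertex_of y))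
                  x y eq_refl eq_refl).
    fold (tree_metric vadj (vertex_of x) (vertex_of y)) in H0.
    set (t := tree_metric vadj (vertex_of x) (vertex_of y)) in *.
    assert (0 <= t) by apply pos_INR. pose proof (metric_nonneg X d hmet x y).
    assert (d x y / (1 + edge_span + / width) <= t + (3 + class_diam)); [|lra].
    apply Rmult_le_reg_r with (1 + edge_span + / width); [lra|].
    unfold Rdiv. rewrite Rmult_assoc, Rinv_l, Rmult_1_r by lra. nra.
  - rewrite rdist_vertex_point. pose proof (tree_metric_vertex_le x y).
    pose proof (metric_nonneg X d hmet x y). unfold Rdiv in H0. nra.
  - intros [[U|U W t] Hp]; destruct (vertex_of_surj U) as [x <-]; exists x;
      unfold rdist, rdist0, vertex_point; simpl;
      rewrite (gdist_refl vertex vadj vadj_tree); simpl; [lra|].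
    eapply Rle_trans; [apply Rmin_r | simpl in Hp; lra].
Qed.

End ChainConditionTree.

Lemma quasi_tree_of_empty {X : Type} (d : X -> X -> R) : (X -> False) -> quasi_tree d.
Proof.
  intros Hempty. exists Empty_set, (fun _ _ => False). split.
  - split; [intros []|]. split; [intros []|]. split; [intros []|].
    intros [l [[] _]].
  - exists (fun x => False_rect _ (Hempty x)), 1, 0.
    repeat split; try lra.
    + destruct (Hempty x).
    + destruct (Hempty x).
    + intros [[[]|[] ? ?] _].

Qed.

Lemma chain_condition_quasi_tree {X : Type} (d : X -> X -> R) :
  is_metric d -> geodesic d -> (exists A, 0 <= A /\ chain_condition d A) -> quasi_tree d.
Proof.
  intros hmet hgeo [A [HA hchain]].
  destruct (classic (inhabited X)) as [[o]|Hempty].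
  - exists (vertex X d A o), (vadj X d A o). split.
    + apply vadj_tree; auto.
    + eexists _, _, _. apply vertex_point_quasi_isometry; auto.
  - apply quasi_tree_of_empty. intros x. exact (Hempty (inhabits x)).
Qed.

Theorem proposition4p1 (X : Type) (d : X -> X -> R)
  (hmet : is_metric d) (hgeo : geodesic d) :
  quasi_tree d <->
  exists A : R, 0 <= A /\
    forall (n : nat) (x : nat -> X), (2 <= n)%nat ->
      gromov d (x 0%nat) (x 1%nat) (x n) >=
        minfrom1 (fun i => gromov d (x 0%nat) (x i) (x (S i))) (n - 2) - A.
Proof.
  split.
  - apply quasi_tree_chain_condition; auto.
  - apply chain_condition_quasi_tree; auto.
Qed.
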